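(* Let $\mathcal{H}=\mathbb{C}^2$ and let $\mathcal{UE}$ be the set of unital entanglement breaking quantum channels on $\mathcal{L}(\mathcal{H})$. For every density operator $\tau$ on $\mathcal{H}\otimes\mathcal{H}$, $$C(\tau,\mathcal{UE})=\max_{\Psi\in\mathcal{UE}}\operatorname{tr}[\tau J_\Psi]\le\frac12\left(1+\|N(\tau)\|\right),$$ where $\|N(\tau)\|=\max_{\boldsymbol{x}\in\mathbb{R}^3,\|\boldsymbol{x}\|=1}\|N(\tau)\boldsymbol{x}\|$ is the operator norm induced by the Euclidean norm.
   Context: A quantum channel is a linear, completely positive, trace preserving map $\Psi:\mathcal{L}(\mathcal{H})\to\mathcal{L}(\mathcal{H})$; it is unital if $\Psi(I)=I$, and entanglement breaking if $(\mathrm{id}\otimes\Psi)(\rho)$ is separable for every density operator $\rho$ on $\mathcal{H}\otimes\mathcal{H}$. $\{|0\rangle,|1\rangle\}$ is the computational basis; $J_\Psi=(\mathrm{id}\otimes\Psi)(P'_+)$ with $P'_+=\sum_{i,j=0}^1|i\rangle\langle j|\otimes|i\rangle\langle j|$. The correlation matrix is $N(X)_{ij}=\operatorname{tr}[X(\sigma_i\otimes\sigma_j)]$, $i,j\in\{1,2,3\}$, with $\sigma_i$ the Pauli matrices. *)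

From HB Require Import structures.
From mathcomp Require Import all_boot all_order all_algebra.
From mathcomp Require Export complex mxtens.
From mathcomp Require Export boolp classical_sets reals.
Set Implicit Arguments.
Unset Strict Implicit.
Unset Printing Implicit Defensive.
Import Order.TTheory GRing.Theory Num.Theory.
Local Open Scope ring_scope.
Local Open Scope classical_set_scope.

Section QuantumDefs.
Variable R : realType.
Local Notation C := (R[i]).

Definition adjmx m n (A : 'M[C]_(m, n)) : 'M[C]_(n, m) := (map_mx Num.conj A)^T.

(* positive semidefinite: <v, A v> >= 0 for all v (in C, 0 <= z means z real, z >= 0) *)
Definition psd n (A : 'M[C]_n) : Prop :=
  forall v : 'cV[C]_n, 0 <= (adjmx v *m A *m v) 0 0.

Definition density n (A : 'M[C]_n) : Prop := psd A /\ \tr A = 1.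

(* (id_n (x) Psi) acting on L(C^n (x) C^2) = 'M_(n*2), with the tensor index
   convention of mxtens (first factor = outer index) *)
Definition lift_map n (Psi : 'M[C]_2 -> 'M[C]_2) (X : 'M[C]_(n * 2)) : 'M[C]_(n * 2) :=
  \matrix_(k, l)
    Psi (\matrix_(a < 2, b < 2)
           X (mxtens_index ((mxtens_unindex k).1, a))
             (mxtens_index ((mxtens_unindex l).1, b)))
        (mxtens_unindex k).2 (mxtens_unindex l).2.

Definition is_linear_map (Psi : 'M[C]_2 -> 'M[C]_2) : Prop :=
  forall (a : C) (X Y : 'M[C]_2), Psi (a *: X + Y) = a *: Psi X + Psi Y.

Definition completely_positive (Psi : 'M[C]_2 -> 'M[C]_2) : Prop :=
  forall n (X : 'M[C]_(n * 2)), psd X -> psd (lift_map Psi X).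

Definition trace_preserving (Psi : 'M[C]_2 -> 'M[C]_2) : Prop :=
  forall X : 'M[C]_2, \tr (Psi X) = \tr X.

Definition quantum_channel (Psi : 'M[C]_2 -> 'M[C]_2) : Prop :=
  [/\ is_linear_map Psi, completely_positive Psi & trace_preserving Psi].

Definition unital (Psi : 'M[C]_2 -> 'M[C]_2) : Prop := Psi 1%:M = 1%:M.

Definition separable (X : 'M[C]_(2 * 2)) : Prop :=
  exists (m : nat) (p : 'I_m -> C) (s w : 'I_m -> 'M[C]_2),
    [/\ forall k, 0 <= p k,
        forall k, density (s k) /\ density (w k)
      & X = \sum_(k < m) p k *: (s k *t w k)].

Definition entanglement_breaking (Psi : 'M[C]_2 -> 'M[C]_2) : Prop :=
  forall rho : 'M[C]_(2 * 2), density rho -> separable (lift_map Psi rho).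

Definition Pplus : 'M[C]_(2 * 2) :=
  \sum_(i < 2) \sum_(j < 2) (delta_mx i j *t delta_mx i j).

Definition choi (Psi : 'M[C]_2 -> 'M[C]_2) : 'M[C]_(2 * 2) := lift_map Psi Pplus.

Definition sigma1 : 'M[C]_2 := \matrix_(a < 2, b < 2) (if a == b then 0 else 1).
Definition sigma2 : 'M[C]_2 :=
  \matrix_(a < 2, b < 2)
    (if a == b then 0 else if (a : nat) == 0%N then - 'i%C else 'i%C).
Definition sigma3 : 'M[C]_2 :=
  \matrix_(a < 2, b < 2)
    (if a == b then (if (a : nat) == 0%N then 1 else -1) else 0).
Definition pauli (k : 'I_3) : 'M[C]_2 :=
  if (k : nat) == 0%N then sigma1 else if (k : nat) == 1%N then sigma2 else sigma3.

(* correlation matrix N(X)_{ij} = tr[X (sigma_i (x) sigma_j)] (real part; it is real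
   for Hermitian X) *)
Definition corr (X : 'M[C]_(2 * 2)) : 'M[R]_3 :=
  \matrix_(i, j) complex.Re (\tr (X *m (pauli i *t pauli j))).

Definition eucl (v : 'cV[R]_3) : R := Num.sqrt (\sum_(i < 3) v i 0 ^+ 2).

Definition opnorm (M : 'M[R]_3) : R :=
  sup [set eucl (M *m x) | x in [set x : 'cV[R]_3 | eucl x = 1]].

End QuantumDefs.

From HB Require Import structures.
From mathcomp Require Import all_boot all_order all_algebra.
From mathcomp Require Import complex mxtens reals.
From mathcomp Require Import ring lra.
Import Order.TTheory GRing.Theory Num.Theory.
Local Open Scope ring_scope.
Set Implicit Arguments.
Unset Strict Implicit.
Unset Printing Implicit Defensive.

(* Since Psi is entanglement breaking, its Choi matrix J, which is twice the image of the
   maximally entangled state P'_+/2 under id (x) Psi, is separable: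
   J = sum_k r_k s_k (x) w_k with r_k >= 0 and density matrices s_k, w_k.  Trace
   preservation and unitality say that both partial traces of J are the identity, i.e.
   sum_k r_k s_k = sum_k r_k w_k = 1, so that sum_k r_k = 2.  Writing
   2 s_k - 1 = a_k . sigma and 2 w_k - 1 = b_k . sigma with Bloch vectors a_k, b_k of
   length at most 1, the marginal conditions cancel the cross terms of tr(tau J), leaving
   tr(tau J) = 1/2 + 1/4 sum_k r_k a_k^T N(tau) b_k <= 1/2 + 1/4 * 2 ||N(tau)||. *)

Lemma ord2P (a : 'I_2) : a = 0 \/ a = 1.
Proof. by case: a => [[|[|//]] lt]; [left|right]; apply: val_inj. Qed.

Lemma big_ord2 (V : nmodType) (F : 'I_2 -> V) : \sum_(i < 2) F i = F 0 + F 1.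
Proof.
rewrite !big_ord_recr big_ord0 /= add0r.
by congr (F _ + F _); apply: val_inj.
Qed.

Lemma big_ord3 (V : nmodType) (F : 'I_3 -> V) :
  \sum_(i < 3) F i = F 0 + F 1 + F 2%:R.
Proof.
rewrite !big_ord_recr big_ord0 /= add0r.
by congr (F _ + F _ + F _); apply: val_inj.
Qed.

Lemma big_mxtens_index (V : nmodType) m n (F : 'I_(m * n) -> V) :
  \sum_k F k = \sum_a \sum_b F (mxtens_index (a, b)).
Proof.
rewrite (reindex (@mxtens_index m n)) /=; last first.
  by exists (@mxtens_unindex m n) => k _; [apply: mxtens_indexK | apply: mxtens_unindexK].
by rewrite pair_big; apply: eq_bigr => -[a b].
Qed.

Lemma mxtrace_delta (K : pzSemiRingType) n (a b : 'I_n) :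
  \tr (delta_mx a b : 'M[K]_n) = (a == b)%:R.
Proof.
rewrite /mxtrace (bigD1 a) //= big1 => [|c /negbTE ca]; last by rewrite mxE ca.
by rewrite mxE eqxx addr0.
Qed.

Section TensorBilinear.
Variables (K : comPzRingType) (m n p q : nat).
Implicit Types (X Y : 'M[K]_(m, n)) (Z W : 'M[K]_(p, q)).

Lemma tensmxDl X Y Z : (X + Y) *t Z = X *t Z + Y *t Z.
Proof. by apply/matrixP => i j; rewrite !mxE mulrDl. Qed.

Lemma tensmxDr X Z W : X *t (Z + W) = X *t Z + X *t W.
Proof. by apply/matrixP => i j; rewrite !mxE mulrDr. Qed.

Lemma tensmxZl (k : K) X Z : (k *: X) *t Z = k *: (X *t Z).
Proof. by apply/matrixP => i j; rewrite !mxE mulrA. Qed.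

Lemma tensmxZr (k : K) X Z : X *t (k *: Z) = k *: (X *t Z).
Proof. by apply/matrixP => i j; rewrite !mxE mulrCA. Qed.

End TensorBilinear.

Lemma tensmx11 (K : comPzRingType) m n :
  (1%:M : 'M[K]_m) *t (1%:M : 'M[K]_n) = 1%:M.
Proof.
apply/matrixP => k l; rewrite !mxE -natrM mulnb.
by rewrite -xpair_eqE -!surjective_pairing (can_eq (@mxtens_unindexK m n)).
Qed.

Section PartialTrace.
Variables (K : comPzRingType) (m n : nat).

Definition ptrace1 (X : 'M[K]_(m * n)) : 'M[K]_n :=
  \matrix_(c, d) \sum_a X (mxtens_index (a, c)) (mxtens_index (a, d)).

Definition ptrace2 (X : 'M[K]_(m * n)) : 'M[K]_m :=
  \matrix_(a, b) \sum_c X (mxtens_index (a, c)) (mxtens_index (b, c)).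

Lemma ptrace1_sum_tens I (r : seq I) (c : I -> K) (A : I -> 'M_m) (B : I -> 'M_n) :
  ptrace1 (\sum_(i <- r) c i *: (A i *t B i))
  = \sum_(i <- r) (c i * \tr (A i)) *: B i.
Proof.
apply/matrixP => x y; rewrite !mxE summxE.
under eq_bigr do rewrite summxE.
rewrite exchange_big; apply: eq_bigr => i _ /=.
rewrite !mxE /mxtrace mulr_sumr mulr_suml; apply: eq_bigr => a _.
by rewrite mxE tensmxE mulrA.
Qed.

Lemma ptrace2_sum_tens I (r : seq I) (c : I -> K) (A : I -> 'M_m) (B : I -> 'M_n) :
  ptrace2 (\sum_(i <- r) c i *: (A i *t B i))
  = \sum_(i <- r) (c i * \tr (B i)) *: A i.
Proof.
apply/matrixP => x y; rewrite !mxE summxE.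
under eq_bigr do rewrite summxE.
rewrite exchange_big; apply: eq_bigr => i _ /=.
rewrite !mxE /mxtrace mulr_sumr mulr_suml; apply: eq_bigr => a _.
by rewrite mxE tensmxE; ring.
Qed.

End PartialTrace.

Section EuclideanR3.
Variable R : realType.
Implicit Types (N : 'M[R]_3) (u v : 'cV[R]_3).

Lemma sqr_dot3_le (a c : 'I_3 -> R) :
  (\sum_i a i * c i) ^+ 2 <= (\sum_i a i ^+ 2) * (\sum_i c i ^+ 2).
Proof.
rewrite !big_ord3 -subr_ge0.
set a0 := a 0; set a1 := a 1; set a2 := a 2%:R.
set c0 := c 0; set c1 := c 1; set c2 := c 2%:R.
(* Lagrange's identity *)
have -> : (a0 ^+ 2 + a1 ^+ 2 + a2 ^+ 2) * (c0 ^+ 2 + c1 ^+ 2 + c2 ^+ 2)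
          - (a0 * c0 + a1 * c1 + a2 * c2) ^+ 2
        = (a0 * c1 - a1 * c0) ^+ 2 + (a0 * c2 - a2 * c0) ^+ 2
          + (a1 * c2 - a2 * c1) ^+ 2 by ring.
by rewrite !addr_ge0 ?sqr_ge0.
Qed.

Lemma sum_sqr_ge0 v : 0 <= \sum_i v i 0 ^+ 2.
Proof. by apply: sumr_ge0 => i _; apply: sqr_ge0. Qed.

Lemma eucl_ge0 v : 0 <= eucl v.
Proof. exact: sqrtr_ge0. Qed.

Lemma sqr_eucl v : eucl v ^+ 2 = \sum_i v i 0 ^+ 2.
Proof. by rewrite sqr_sqrtr ?sum_sqr_ge0. Qed.

Lemma eucl_le1 v : (eucl v <= 1) = (\sum_i v i 0 ^+ 2 <= 1).
Proof. by rewrite -sqr_eucl -{2}(expr1n _ 2) ler_pXn2r ?nnegrE ?eucl_ge0. Qed.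

Lemma euclZ (k : R) v : eucl (k *: v) = `|k| * eucl v.
Proof.
rewrite /eucl -sqrtr_sqr -sqrtrM ?sqr_ge0 // mulr_sumr.
by congr Num.sqrt; apply: eq_bigr => i _; rewrite mxE exprMn.
Qed.

Lemma eucl_eq0 v : eucl v = 0 -> v = 0.
Proof.
move=> /eqP; rewrite sqrtr_eq0 => le0.
have sum0 : \sum_i v i 0 ^+ 2 = 0 by apply/le_anti; rewrite le0 sum_sqr_ge0.
apply/matrixP => i j; rewrite (ord1 j) mxE; apply/eqP; rewrite -sqrf_eq0.
by apply/eqP; apply: (psumr_eq0P _ sum0) => // k _; apply: sqr_ge0.
Qed.

Lemma dot_le_eucl u v : \sum_i u i 0 * v i 0 <= eucl u * eucl v.
Proof.
apply: le_trans (ler_norm _) _.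
rewrite -sqrtr_sqr -sqrtrM ?sum_sqr_ge0 //.
exact/ler_wsqrtr/sqr_dot3_le.
Qed.

Lemma opnorm_bounded N :
  has_ubound [set eucl (N *m x) | x in [set x : 'cV[R]_3 | eucl x = 1]].
Proof.
exists (Num.sqrt (\sum_i \sum_j N i j ^+ 2)) => _ [x /= x1 <-].
apply: ler_wsqrtr; apply: ler_sum => i _.
have := sqr_dot3_le (N i) (fun j => x j 0).
by rewrite -sqr_eucl x1 expr1n mulr1 mxE.
Qed.

Lemma eucl_mul_le_opnorm N x : eucl x = 1 -> eucl (N *m x) <= opnorm N.
Proof. by move=> x1; apply: (ub_le_sup (opnorm_bounded N)); exists x. Qed.

Lemma opnorm_ge0 N : 0 <= opnorm N.
Proof.
apply: le_trans (eucl_ge0 (N *m delta_mx 0 0)) (eucl_mul_le_opnorm _ _).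
by rewrite /eucl big_ord3 !mxE /= expr1n !expr0n /= !addr0 sqrtr1.
Qed.

Lemma eucl_mul_le N v : eucl (N *m v) <= opnorm N * eucl v.
Proof.
have [v0|v_neq0] := eqVneq (eucl v) 0.
  have eucl0 : eucl (0 : 'cV[R]_3) = 0.
    by rewrite /eucl big1 ?sqrtr0 // => i _; rewrite mxE expr0n.
  by rewrite (eucl_eq0 v0) mulmx0 eucl0 mulr0.
have v_gt0 : 0 < eucl v by rewrite lt_def v_neq0 eucl_ge0.
have unit : eucl ((eucl v)^-1 *: v) = 1.
  by rewrite euclZ ger0_norm ?invr_ge0 ?eucl_ge0 // mulVf.
have := eucl_mul_le_opnorm N unit.
by rewrite -scalemxAr euclZ ger0_norm ?invr_ge0 ?eucl_ge0 // ler_pdivrMl // mulrC.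
Qed.

Lemma bilin_le_opnorm N u v : eucl u <= 1 -> eucl v <= 1 ->
  \sum_i \sum_j u i 0 * v j 0 * N i j <= opnorm N.
Proof.
move=> u1 v1.
have -> : \sum_i \sum_j u i 0 * v j 0 * N i j = \sum_i u i 0 * (N *m v) i 0.
  apply: eq_bigr => i _; rewrite mxE mulr_sumr.
  by apply: eq_bigr => j _; rewrite -mulrA (mulrC (v j 0)).
apply: le_trans (dot_le_eucl u (N *m v)) _.
apply: le_trans (ler_wpM2r (eucl_ge0 _) u1) _; rewrite mul1r.
apply: le_trans (eucl_mul_le N v) _.
by rewrite -[leRHS]mulr1 ler_wpM2l ?opnorm_ge0.
Qed.

End EuclideanR3.

Section ComplexParts.
Variable R : realType.
Implicit Types x y : R[i].

Lemma complex_ReIm_eq x y :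
  complex.Re x = complex.Re y -> complex.Im x = complex.Im y -> x = y.
Proof. by case: x y => [a b] [c d] /= -> ->. Qed.

Lemma ReM x y :
  complex.Re (x * y) = complex.Re x * complex.Re y - complex.Im x * complex.Im y.
Proof. by case: x y => [a b] [c d]. Qed.

Lemma ImM x y :
  complex.Im (x * y) = complex.Re x * complex.Im y + complex.Im x * complex.Re y.
Proof. by case: x y => [a b] [c d]. Qed.

Lemma ReJ x : complex.Re x^* = complex.Re x.
Proof. by case: x. Qed.

Lemma ImJ x : complex.Im x^* = - complex.Im x.
Proof. by case: x. Qed.

Lemma ge0_ReIm x : 0 <= x -> complex.Im x = 0 /\ 0 <= complex.Re x.
Proof. by rewrite lecE => /andP[/eqP]. Qed.

Lemma ReD x y : complex.Re (x + y) = complex.Re x + complex.Re y.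
Proof. exact: raddfD. Qed.

Lemma ImD x y : complex.Im (x + y) = complex.Im x + complex.Im y.
Proof. exact: raddfD. Qed.

Lemma Re0 : complex.Re (0 : R[i]) = 0. Proof. by []. Qed.
Lemma Im0 : complex.Im (0 : R[i]) = 0. Proof. by []. Qed.
Lemma Re1 : complex.Re (1 : R[i]) = 1. Proof. by []. Qed.
Lemma Im1 : complex.Im (1 : R[i]) = 0. Proof. by []. Qed.
Lemma Rei : complex.Re ('i%C : R[i]) = 0. Proof. by []. Qed.
Lemma Imi : complex.Im ('i%C : R[i]) = 1. Proof. by []. Qed.

Lemma ReN x : complex.Re (- x) = - complex.Re x.
Proof. exact: raddfN. Qed.

Lemma ImN x : complex.Im (- x) = - complex.Im x.
Proof. exact: raddfN. Qed.

Lemma ReC (r : R) : complex.Re r%:C%C = r. Proof. by []. Qed.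
Lemma ImC (r : R) : complex.Im r%:C%C = 0. Proof. by []. Qed.

Lemma Ren n : complex.Re (n%:R : R[i]) = n%:R.
Proof. exact: raddfMn. Qed.

Lemma Imn n : complex.Im (n%:R : R[i]) = 0.
Proof. by rewrite raddfMn mul0rn. Qed.

(* The constants come first and ReC, ImC, Ren, Imn last: the latter unify with any
   closed complex expression by computation and would leave unnormalized terms. *)
Definition ReImE := (Re0, Im0, Re1, Im1, Rei, Imi, ReD, ImD, ReN, ImN,
                     ReM, ImM, ReJ, ImJ, ReC, ImC, Ren, Imn).

End ComplexParts.

Section Hermitian.
Variable R : realType.
Local Notation C := R[i].

Definition hermitian n (A : 'M[C]_n) := forall i j, A j i = (A i j)^*.

Lemma adjmxE m n (A : 'M[C]_(m, n)) i j : adjmx A j i = (A i j)^*.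
Proof. by rewrite !mxE. Qed.

Lemma adjmxK m n (A : 'M[C]_(m, n)) : adjmx (adjmx A) = A.
Proof. by apply/matrixP => i j; rewrite !adjmxE conjCK. Qed.

Lemma adjmxM m n p (A : 'M[C]_(m, n)) (B : 'M[C]_(n, p)) :
  adjmx (A *m B) = adjmx B *m adjmx A.
Proof.
apply/matrixP => i j; rewrite !mxE rmorph_sum; apply: eq_bigr => k _.
by rewrite !mxE rmorphM mulrC.
Qed.

Lemma adjmxD m n (A B : 'M[C]_(m, n)) : adjmx (A + B) = adjmx A + adjmx B.
Proof. by apply/matrixP => i j; rewrite !mxE rmorphD. Qed.

Lemma adjmxZ m n (c : C) (A : 'M[C]_(m, n)) : adjmx (c *: A) = c^* *: adjmx A.
Proof. by apply/matrixP => i j; rewrite !mxE rmorphM. Qed.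

Lemma adjmx_delta n (i : 'I_n) : adjmx (delta_mx i 0) = delta_mx 0 i :> 'rV[C]_n.
Proof.
apply/matrixP => a b; rewrite !mxE (ord1 a) /=.
by case: (b == i); rewrite /= ?rmorph1 ?rmorph0.
Qed.

Lemma form_delta n (A : 'M[C]_n) i j :
  (delta_mx 0 i *m A *m delta_mx j 0 : 'M[C]_1) 0 0 = A i j.
Proof. by rewrite -rowE -colE !mxE. Qed.

Lemma form_delta2 n (A : 'M[C]_n) i j (a b : C) :
  (adjmx (a *: delta_mx i 0 + b *: delta_mx j 0) *m A
     *m (a *: delta_mx i 0 + b *: delta_mx j 0) : 'M_1) 0 0
  = a^* * a * A i i + a^* * b * A i j + b^* * a * A j i + b^* * b * A j j.
Proof.
rewrite adjmxD !adjmxZ !adjmx_delta !mulmxDr !mulmxDl -!scalemxAl -!scalemxAr.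
by rewrite !(form_delta, mxE); ring.
Qed.

Lemma psd_form_delta2 n (A : 'M[C]_n) i j (a b : C) : psd A ->
  0 <= a^* * a * A i i + a^* * b * A i j + b^* * a * A j i + b^* * b * A j j.
Proof. by rewrite -form_delta2; apply. Qed.

Lemma psd_hermitian n (A : 'M[C]_n) : psd A -> hermitian A.
Proof.
move=> A_psd i j.
have real a b := ge0_ReIm (psd_form_delta2 i j a b A_psd).
move: (real 0 1) (real 1 0) (real 1 1) (real 1 'i%C).
rewrite !ReImE => -[Ajj_real _] [Aii_real _] [real_1 _] [real_i _].
by apply: complex_ReIm_eq; rewrite !ReImE; lra.
Qed.

Lemma psd_rank1 n (u : 'cV[C]_n) : psd (u *m adjmx u).
Proof.
move=> v; rewrite !mulmxA -(mulmxA (adjmx v *m u)) -[adjmx u *m v]adjmxK.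
rewrite adjmxM adjmxK mxE big_ord1 adjmxE; exact: mulcJ_ge0.
Qed.

Lemma psdZ n (c : C) (A : 'M[C]_n) : 0 <= c -> psd A -> psd (c *: A).
Proof.
by move=> c_ge0 A_psd v; rewrite -scalemxAr -scalemxAl mxE mulr_ge0.
Qed.

Lemma hermitian_tens m n (A : 'M[C]_m) (B : 'M[C]_n) :
  hermitian A -> hermitian B -> hermitian (A *t B).
Proof.
move=> hA hB k l; case: (mxtens_indexP k) => a c; case: (mxtens_indexP l) => b d.
by rewrite !tensmxE hA hB rmorphM.
Qed.

Lemma adjmx_hermitian n (A : 'M[C]_n) : hermitian A -> adjmx A = A.
Proof. by move=> hA; apply/matrixP => i j; rewrite adjmxE hA conjCK. Qed.

Lemma mxtrace_adjmx n (A : 'M[C]_n) : \tr (adjmx A) = (\tr A)^*.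
Proof. by rewrite /mxtrace rmorph_sum; apply: eq_bigr => i _; rewrite adjmxE. Qed.

Lemma Im_mxtrace_hermitian n (A B : 'M[C]_n) :
  hermitian A -> hermitian B -> complex.Im (\tr (A *m B)) = 0.
Proof.
move=> hA hB.
have trJ : (\tr (A *m B))^* = \tr (A *m B).
  by rewrite -mxtrace_adjmx adjmxM !adjmx_hermitian // mxtrace_mulC.
by have := congr1 (@complex.Im R) trJ; rewrite ImJ; lra.
Qed.

End Hermitian.

Section Bloch.
Variable R : realType.
Local Notation C := R[i].

Definition bloch (s : 'M[C]_2) : 'cV[R]_3 :=
  \col_(k < 3) (if (k : nat) == 0 then 2 * complex.Re (s 1 0)
                else if (k : nat) == 1 then 2 * complex.Im (s 1 0)
                else complex.Re (s 0 0) - complex.Re (s 1 1)).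

Lemma density2P (s : 'M[C]_2) : density s ->
  [/\ complex.Im (s 0 0) = 0, complex.Im (s 1 1) = 0,
      complex.Re (s 0 0) + complex.Re (s 1 1) = 1 & s 0 1 = (s 1 0)^*].
Proof.
move=> [/psd_hermitian s_herm tr1].
have real k : complex.Im (s k k) = 0.
  by have := congr1 (@complex.Im R) (s_herm k k); rewrite ImJ; lra.
split; [exact: real | exact: real | | exact: s_herm].
by have := congr1 (@complex.Re R) tr1; rewrite /mxtrace big_ord2 ReD Re1.
Qed.

Lemma bloch_decomp (s : 'M[C]_2) : density s ->
  2%:R *: s - 1%:M = \sum_k (bloch s k 0)%:C%C *: pauli R k.
Proof.
move=> /density2P[Im00 Im11 tr1 s01].
apply/matrixP => a b; rewrite summxE big_ord3 !mxE.
by case: (ord2P a) => ->; case: (ord2P b) => ->;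
  rewrite /pauli /sigma1 /sigma2 /sigma3 /= ?mxE /=;
  apply: complex_ReIm_eq; rewrite ?s01 !ReImE; lra.
Qed.

Lemma bloch_norm (s : 'M[C]_2) : density s -> eucl (bloch s) <= 1.
Proof.
move=> s_dens; have [Im00 Im11 tr1 s01] := density2P s_dens.
(* At (-s01, s00) and (s11, -s10) the form of s takes the values x det and y det, with
   det = x y - u^2 - w^2; these add up to det as x + y = 1, and
   |bloch s|^2 = (x + y)^2 - 4 det. *)
have q1 := (ge0_ReIm (psd_form_delta2 0 1 (- s 0 1) (s 0 0) s_dens.1)).2.
have q2 := (ge0_ReIm (psd_form_delta2 0 1 (s 1 1) (- s 1 0) s_dens.1)).2.
rewrite s01 !ReImE Im00 Im11 in q1 q2.
set x := complex.Re (s 0 0) in tr1 q1 q2 *; set y := complex.Re (s 1 1) in tr1 q1 q2 *.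
set u := complex.Re (s 1 0) in q1 q2 *; set w := complex.Im (s 1 0) in q1 q2 *.
have det_ge0 : 0 <= x * y - u ^+ 2 - w ^+ 2 by nra.
by rewrite eucl_le1 big_ord3 !mxE /=; nra.
Qed.

End Bloch.

Section Expectation.
Variables (R : realType) (m n : nat) (tau : 'M[R[i]]_(m * n)).
Local Notation C := R[i].

Definition expect_tens (X : 'M[C]_m) (Y : 'M[C]_n) : C := \tr (tau *m (X *t Y)).

Lemma expect_tensDl X X' Y :
  expect_tens (X + X') Y = expect_tens X Y + expect_tens X' Y.
Proof. by rewrite /expect_tens tensmxDl mulmxDr mxtraceD. Qed.

Lemma expect_tensDr X Y Y' :
  expect_tens X (Y + Y') = expect_tens X Y + expect_tens X Y'.
Proof. by rewrite /expect_tens tensmxDr mulmxDr mxtraceD. Qed.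

Lemma expect_tensZl (c : C) X Y : expect_tens (c *: X) Y = c * expect_tens X Y.
Proof. by rewrite /expect_tens tensmxZl -scalemxAr mxtraceZ. Qed.

Lemma expect_tensZr (c : C) X Y : expect_tens X (c *: Y) = c * expect_tens X Y.
Proof. by rewrite /expect_tens tensmxZr -scalemxAr mxtraceZ. Qed.

Lemma expect_tensNl X Y : expect_tens (- X) Y = - expect_tens X Y.
Proof. by rewrite -scaleN1r expect_tensZl mulN1r. Qed.

Lemma expect_tensNr X Y : expect_tens X (- Y) = - expect_tens X Y.
Proof. by rewrite -scaleN1r expect_tensZr mulN1r. Qed.

Lemma expect_tens_suml I r (P : pred I) (X : I -> 'M[C]_m) Y :
  expect_tens (\sum_(i <- r | P i) X i) Y = \sum_(i <- r | P i) expect_tens (X i) Y.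
Proof.
apply: (big_morph (expect_tens^~ Y) (fun X X' => expect_tensDl X X' Y)).
by rewrite /expect_tens tens0mx mulmx0 mxtrace0.
Qed.

Lemma expect_tens_sumr I r (P : pred I) X (Y : I -> 'M[C]_n) :
  expect_tens X (\sum_(i <- r | P i) Y i) = \sum_(i <- r | P i) expect_tens X (Y i).
Proof.
apply: (big_morph (expect_tens X) (expect_tensDr X)).
by rewrite /expect_tens tensmx0 mulmx0 mxtrace0.
Qed.

Lemma expect_tens11 : expect_tens 1%:M 1%:M = \tr tau.
Proof. by rewrite /expect_tens tensmx11 mulmx1. Qed.

Lemma expect_tens_centered X Y :
  expect_tens (2%:R *: X - 1%:M) (2%:R *: Y - 1%:M)
  = 4%:R * expect_tens X Y - 2%:R * expect_tens X 1%:M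
    - 2%:R * expect_tens 1%:M Y + expect_tens 1%:M 1%:M.
Proof.
rewrite !(expect_tensDl, expect_tensDr, expect_tensNl, expect_tensNr).
by rewrite !(expect_tensZl, expect_tensZr); ring.
Qed.

Lemma expect_tens_sum_centered I (r : seq I) (c : I -> C)
    (s : I -> 'M[C]_m) (w : I -> 'M[C]_n) :
  \sum_(i <- r) c i *: s i = 1%:M -> \sum_(i <- r) c i *: w i = 1%:M ->
  \sum_(i <- r) c i * expect_tens (2%:R *: s i - 1%:M) (2%:R *: w i - 1%:M)
  = 4%:R * \sum_(i <- r) c i * expect_tens (s i) (w i)
    + (\sum_(i <- r) c i - 4%:R) * expect_tens 1%:M 1%:M.
Proof.
move=> sum_s sum_w.
have sum_s1 : \sum_(i <- r) c i * expect_tens (s i) 1%:M = expect_tens 1%:M 1%:M.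
  rewrite -[X in _ = expect_tens X _]sum_s expect_tens_suml.
  by apply: eq_bigr => i _; rewrite expect_tensZl.
have sum_1w : \sum_(i <- r) c i * expect_tens 1%:M (w i) = expect_tens 1%:M 1%:M.
  rewrite -[X in _ = expect_tens _ X]sum_w expect_tens_sumr.
  by apply: eq_bigr => i _; rewrite expect_tensZr.
under eq_bigr do rewrite expect_tens_centered.
set F11 := expect_tens 1%:M 1%:M.
have -> : 4%:R * \sum_(i <- r) c i * expect_tens (s i) (w i)
      + (\sum_(i <- r) c i - 4%:R) * F11
    = 4%:R * \sum_(i <- r) c i * expect_tens (s i) (w i)
      - 2%:R * \sum_(i <- r) c i * expect_tens (s i) 1%:M
      - 2%:R * \sum_(i <- r) c i * expect_tens 1%:M (w i) + (\sum_(i <- r) c i) * F11.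
  by rewrite sum_s1 sum_1w; ring.
rewrite mulr_suml !mulr_sumr -!sumrB -big_split /=.
by apply: eq_bigr => i _; ring.
Qed.

End Expectation.

Section PauliExpectation.
Variable R : realType.
Local Notation C := R[i].

Lemma pauli_hermitian k : hermitian (pauli R k).
Proof.
move=> a b; case: k => [[|[|[|//]]] ?]; case: (ord2P a) => ->; case: (ord2P b) => ->;
  rewrite /pauli /sigma1 /sigma2 /sigma3 /= ?mxE /=;
  by apply: complex_ReIm_eq; rewrite !ReImE; lra.
Qed.

Variable tau : 'M[C]_(2 * 2).
Hypothesis tau_herm : hermitian tau.

Lemma expect_pauli i j :
  expect_tens tau (pauli R i) (pauli R j) = (corr tau i j)%:C%C.
Proof.
apply: complex_ReIm_eq; first by rewrite ReC /corr mxE.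
by rewrite ImC Im_mxtrace_hermitian //; apply: hermitian_tens; apply: pauli_hermitian.
Qed.

Lemma expect_bloch (s w : 'M[C]_2) : density s -> density w ->
  expect_tens tau (2%:R *: s - 1%:M) (2%:R *: w - 1%:M)
  = (\sum_i \sum_j bloch s i 0 * bloch w j 0 * corr tau i j)%:C%C.
Proof.
move=> s_dens w_dens; rewrite (bloch_decomp s_dens) (bloch_decomp w_dens).
rewrite expect_tens_suml rmorph_sum; apply: eq_bigr => i _.
rewrite expect_tensZl expect_tens_sumr mulr_sumr rmorph_sum; apply: eq_bigr => j _.
by rewrite expect_tensZr expect_pauli !rmorphM mulrA.
Qed.

End PauliExpectation.

Section LinearMap.
Variables (R : realType) (Psi : 'M[R[i]]_2 -> 'M[R[i]]_2).
Hypothesis Psi_lin : is_linear_map Psi.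

Lemma linear_map0 : Psi 0 = 0.
Proof.
have := Psi_lin 1 0 0; rewrite !scale1r addr0 => Psi0.
by apply: (addrI (Psi 0)); rewrite addr0 -Psi0.
Qed.

Lemma linear_mapD X Y : Psi (X + Y) = Psi X + Psi Y.
Proof. by have := Psi_lin 1 X Y; rewrite !scale1r. Qed.

Lemma linear_mapZ c X : Psi (c *: X) = c *: Psi X.
Proof. by rewrite -[c *: X]addr0 Psi_lin linear_map0 addr0. Qed.

Lemma linear_map_sum I (r : seq I) (X : I -> 'M[R[i]]_2) :
  Psi (\sum_(i <- r) X i) = \sum_(i <- r) Psi (X i).
Proof. exact: (big_morph Psi linear_mapD linear_map0). Qed.

Lemma lift_mapZ n c (X : 'M[R[i]]_(n * 2)) :
  lift_map Psi (c *: X) = c *: lift_map Psi X.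
Proof.
have blockZ k l :
    \matrix_(a < 2, b < 2) (c *: X) (mxtens_index (k, a)) (mxtens_index (l, b))
    = c *: \matrix_(a < 2, b < 2) X (mxtens_index (k, a)) (mxtens_index (l, b)).
  by apply/matrixP => a b; rewrite !mxE.
by apply/matrixP => k l; rewrite /lift_map mxE blockZ linear_mapZ !mxE.
Qed.

End LinearMap.

Section Choi.
Variable R : realType.
Local Notation C := R[i].
Implicit Type Psi : 'M[C]_2 -> 'M[C]_2.
Local Notation idx := mxtens_index.

Lemma PplusE a b c d : Pplus R (idx (a, c)) (idx (b, d)) = ((a == c) && (b == d))%:R.
Proof.
rewrite /Pplus summxE big_ord2 !summxE !big_ord2 !tensmxE !mxE.
by case: (ord2P a) => ->; case: (ord2P b) => ->; case: (ord2P c) => ->;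
  case: (ord2P d) => ->; rewrite /= ?mulr1 ?mulr0 ?mul0r ?addr0 ?add0r.
Qed.

Definition max_entangled : 'cV[C]_(2 * 2) :=
  \col_k ((mxtens_unindex k).1 == (mxtens_unindex k).2)%:R.

Lemma Pplus_rank1 : Pplus R = max_entangled *m adjmx max_entangled.
Proof.
apply/matrixP => k l; case: (mxtens_indexP k) => a c; case: (mxtens_indexP l) => b d.
rewrite PplusE mxE big_ord1 !mxE !mxtens_indexK /= rmorph_nat -natrM mulnb.
by case: (a == c); case: (b == d).
Qed.

Lemma density_half_Pplus : density (2%:R^-1 *: Pplus R).
Proof.
split; first by rewrite Pplus_rank1; apply: psdZ (psd_rank1 _); rewrite invr_ge0 ler0n.
rewrite mxtraceZ /mxtrace big_mxtens_index !big_ord2 !PplusE /= addr0 add0r.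
by rewrite -natrD mulVf // pnatr_eq0.
Qed.

Lemma choiE Psi a b c d : choi Psi (idx (a, c)) (idx (b, d)) = Psi (delta_mx a b) c d.
Proof.
rewrite /choi /lift_map mxE !mxtens_indexK /=; congr (Psi _ _ _).
by apply/matrixP => x y; rewrite !mxE PplusE (eq_sym a) (eq_sym b).
Qed.

Lemma ptrace2_choi Psi : trace_preserving Psi -> ptrace2 (choi Psi) = 1%:M.
Proof.
move=> Psi_tp; apply/matrixP => a b; rewrite !mxE.
under eq_bigr do rewrite choiE.
by rewrite -/(mxtrace _) Psi_tp mxtrace_delta.
Qed.

Lemma ptrace1_choi Psi : is_linear_map Psi -> unital Psi -> ptrace1 (choi Psi) = 1%:M.
Proof.
move=> Psi_lin Psi_unital; apply/matrixP => c d; rewrite mxE.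
under eq_bigr do rewrite choiE.
by rewrite -summxE -linear_map_sum // -mx1_sum_delta Psi_unital.
Qed.

Lemma choi_separable Psi : is_linear_map Psi -> entanglement_breaking Psi ->
  exists m (r : 'I_m -> R) (s w : 'I_m -> 'M[C]_2),
    [/\ forall k, 0 <= r k, forall k, density (s k) /\ density (w k)
      & choi Psi = \sum_k (r k)%:C%C *: (s k *t w k)].
Proof.
move=> Psi_lin Psi_eb.
have [m [p [s [w [p_ge0 sw_dens sep]]]]] := Psi_eb _ density_half_Pplus.
exists m, (fun k => 2 * complex.Re (p k)), s, w; split => // [k|].
  by rewrite mulr_ge0 // (ge0_ReIm (p_ge0 k)).2.
have -> : choi Psi = 2%:R *: lift_map Psi (2%:R^-1 *: Pplus R).
  by rewrite (lift_mapZ Psi_lin) scalerA divff ?pnatr_eq0 // scale1r.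
rewrite sep scaler_sumr; apply: eq_bigr => k _.
by rewrite scalerA rmorphM rmorph_nat /= (RRe_real (ger0_real (p_ge0 k))).
Qed.

End Choi.

Lemma sum_weights_trace1 (R : realType) n I (r : seq I) (c : I -> R)
    (s : I -> 'M[R[i]]_n) :
  (forall i, \tr (s i) = 1) -> \sum_(i <- r) (c i)%:C%C *: s i = 1%:M ->
  \sum_(i <- r) c i = n%:R.
Proof.
move=> tr_s /(congr1 mxtrace); rewrite mxtrace1 raddf_sum => /(congr1 (@complex.Re R)).
rewrite Ren raddf_sum => <-; apply: eq_bigr => i _ /=.
by rewrite mxtraceZ tr_s mulr1 ReC.
Qed.

Lemma expect_separable_le (R : realType) (tau : 'M[R[i]]_(2 * 2)) m
    (r : 'I_m -> R) (s w : 'I_m -> 'M[R[i]]_2) :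
  density tau -> (forall k, 0 <= r k) ->
  (forall k, density (s k) /\ density (w k)) ->
  \sum_k (r k)%:C%C *: s k = 1%:M -> \sum_k (r k)%:C%C *: w k = 1%:M ->
  \tr (tau *m \sum_k (r k)%:C%C *: (s k *t w k))
    <= ((1 + opnorm (corr tau)) / 2)%:C%C.
Proof.
move=> [tau_psd tr_tau] r_ge0 sw_dens sum_s sum_w.
pose t k := \sum_i \sum_j bloch (s k) i 0 * bloch (w k) j 0 * corr tau i j.
have sum_r : \sum_k r k = 2 := sum_weights_trace1 (fun k => (sw_dens k).1.2) sum_s.
have sum_rt_le : \sum_k r k * t k <= 2 * opnorm (corr tau).
  rewrite -sum_r mulr_suml; apply: ler_sum => k _; rewrite ler_wpM2l //.
  by have [ds dw] := sw_dens k; apply: bilin_le_opnorm; apply: bloch_norm.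
have sum_rt : (\sum_k r k * t k)%:C%C
    = 4%:R * \sum_k (r k)%:C%C * expect_tens tau (s k) (w k) - 2%:R.
  have rt k : (r k * t k)%:C%C
      = (r k)%:C%C * expect_tens tau (2%:R *: s k - 1%:M) (2%:R *: w k - 1%:M).
    have [s_dens w_dens] := sw_dens k.
    by rewrite rmorphM /= (expect_bloch (psd_hermitian tau_psd)).
  rewrite rmorph_sum (eq_bigr _ (fun k _ => rt k)) expect_tens_sum_centered //.
  by rewrite -rmorph_sum sum_r expect_tens11 tr_tau rmorph_nat; ring.
have -> : \tr (tau *m \sum_k (r k)%:C%C *: (s k *t w k))
          = ((2 + \sum_k r k * t k) / 4)%:C%C.
  rewrite fmorph_div rmorphD /= sum_rt mulmx_sumr raddf_sum !rmorph_nat.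
  under eq_bigr do rewrite /= -scalemxAr mxtraceZ.
  by field.
by rewrite lecR; lra.
Qed.

Unset Implicit Arguments.

Theorem proposition3 (R : realType) (tau : 'M[R[i]]_(2 * 2)) :
  density tau ->
  forall Psi : 'M[R[i]]_2 -> 'M[R[i]]_2,
    quantum_channel Psi -> unital Psi -> entanglement_breaking Psi ->
    \tr (tau *m choi Psi) <= ((1 + opnorm (corr tau)) / 2)%:C%C.
Proof.
move=> tau_dens Psi [Psi_lin _ Psi_tp] Psi_unital Psi_eb.
have [m [r [s [w [r_ge0 sw_dens J_sep]]]]] := choi_separable Psi_lin Psi_eb.
rewrite J_sep; apply: expect_separable_le => //.
- rewrite -(ptrace2_choi Psi_tp) J_sep ptrace2_sum_tens.
  by apply: eq_bigr => k _; rewrite (sw_dens k).2.2 mulr1.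
- rewrite -(ptrace1_choi Psi_lin Psi_unital) J_sep ptrace1_sum_tens.
  by apply: eq_bigr => k _; rewrite (sw_dens k).1.2 mulr1.
Qed.
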